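(* Let $A$ be a finite set of positive integers. Then $A$ is relatively prime if and only if there exists an $\mathcal{N}$-set $K \subseteq \mathbb{R}$ such that $A = (K-K)\cap \mathbb{N}$.
   Context: $\mathbb{N}$ denotes the set of positive integers. A set $A$ of integers is relatively prime if $A$ is nonempty and its elements have no common factor greater than $1$ (equivalently, $A$ generates the additive group $\mathbb{Z}$). For $K \subseteq \mathbb{R}^n$, $K-K=\{x-y : x,y\in K\}$. An $\mathcal{N}$-set in $\mathbb{R}^n$ is a compact set $K\subseteq\mathbb{R}^n$ such that for every $x\in\mathbb{R}^n$ there exists $y\in K$ with $x-y\in\mathbb{Z}^n$. *)

From Stdlib Require Export Reals ZArith Arith List.
Open Scope R_scope.

Definition rel_prime_set (A : list nat) : Prop :=
  A <> nil /\
  forall d : nat, (1 < d)%nat -> ~ (forall a, In a A -> Nat.divide d a).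

Definition N_set (K : R -> Prop) : Prop :=
  compact K /\ forall x : R, exists y : R, K y /\ exists z : Z, x - y = IZR z.

From Stdlib Require Import Reals ZArith Lia Lra List Classical ClassicalDescription.
Open Scope R_scope.

(* Necessity.  Suppose every element of A is divisible by some d > 1 and K is an
   N-set whose positive integer differences lie in A.  Then all integer
   differences of K are divisible by d, so R splits into the two disjoint sets
   K + dZ and K + (Z \ dZ).  Both are closed (a compact set plus any set of
   integers is closed) and nonempty, contradicting the connectedness of R.

   Sufficiency.  Bezout's identity gives a walk: a list of steps ±a (a ∈ A)
   with total sum -1 which contains every a ∈ A as a positive step.  With
   partial sums c_0, ..., c_{N-1} (N = length + 1) the "staircase"
     K = ⋃_{j<N} [c_j + j/N, c_j + (j+1)/N]
   is compact and meets every class of R/Z.  Two points of K at integer distance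
   lie in equal, adjacent, or extreme pieces, so the integer differences of K
   are exactly the steps of the walk (up to sign) and 0. *)

Lemma open_set_ext (D1 D2 : R -> Prop) :
  open_set D1 -> (forall x, D1 x <-> D2 x) -> open_set D2.
Proof.
  intros H1 H12. apply (open_set_P6 D1); [exact H1|].
  split; intros x Hx; apply H12; exact Hx.
Qed.

Lemma closed_set_ext (D1 D2 : R -> Prop) :
  closed_set D1 -> (forall x, D1 x <-> D2 x) -> closed_set D2.
Proof.
  intros H1 H12. apply (open_set_ext _ _ H1).
  intros x; split; intros Hx Hd; apply Hx, H12, Hd.
Qed.

Lemma closed_set_empty : closed_set (fun _ => False).
Proof. apply (open_set_ext _ _ open_set_P5). intros x; unfold complementary; tauto. Qed.

Lemma closed_set_union (D1 D2 : R -> Prop) :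
  closed_set D1 -> closed_set D2 -> closed_set (fun x => D1 x \/ D2 x).
Proof.
  intros H1 H2. apply (open_set_ext _ _ (open_set_P3 _ _ H1 H2)).
  intros x; unfold intersection_domain, complementary; tauto.
Qed.

Lemma closed_set_finite_union (F : nat -> R -> Prop) (N : nat) :
  (forall i, (i < N)%nat -> closed_set (F i)) ->
  closed_set (fun x => exists i, (i < N)%nat /\ F i x).
Proof.
  induction N as [|N IH]; intros HF.
  - apply (closed_set_ext _ _ closed_set_empty).
    intros x; split; [intros []|intros [i [Hi _]]; lia].
  - assert (Hinit : closed_set (fun x => exists i, (i < N)%nat /\ F i x))
      by (apply IH; intros i Hi; apply HF; lia).
    apply (closed_set_ext _ _ (closed_set_union _ _ Hinit (HF N (Nat.lt_succ_diag_r N)))).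
    intros x; split.
    + intros [[i [Hi Hx]]|Hx]; [exists i|exists N]; split; auto; lia.
    + intros [i [Hi Hx]]. destruct (Nat.eq_dec i N) as [->|Hne]; [now right|].
      left; exists i; split; [lia|exact Hx].
Qed.

Lemma closed_set_preimage (f : R -> R) (D : R -> Prop) :
  continuity f -> closed_set D -> closed_set (fun x => D (f x)).
Proof. intros Hf HD. exact (continuity_P2 f _ Hf HD). Qed.

(* K + S is closed for K compact and S any set of integers: near a point x only
   the finitely many translates K + m with m in a bounded window matter. *)
Lemma compact_plus_integers_closed (K : R -> Prop) (S : Z -> Prop) :
  compact K -> closed_set (fun x => exists k m, K k /\ S m /\ x - k = IZR m).
Proof.
  intros HK x Hx.
  destruct (compact_P1 _ HK) as [a [b Hab]].
  set (L := (Int_part (x - b) - 1)%Z).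
  set (N := Z.to_nat (up (b - a + 3))).
  set (V := fun y => exists i, (i < N)%nat /\
              (S (L + Z.of_nat i)%Z /\ K (y - IZR (L + Z.of_nat i)))).
  assert (HV : closed_set V).
  { apply closed_set_finite_union. intros i _.
    destruct (classic (S (L + Z.of_nat i)%Z)) as [Hs|Hs].
    - apply (closed_set_ext _ _ (closed_set_preimage (fun y => y - IZR (L + Z.of_nat i)) K
               ltac:(reg) (compact_P2 _ HK))).
      intros y; tauto.
    - apply (closed_set_ext _ _ closed_set_empty). intros y; tauto. }
  assert (HxV : ~ V x).
  { intros [i [_ [Hs Hk]]]. apply Hx.
    exists (x - IZR (L + Z.of_nat i)), (L + Z.of_nat i)%Z. repeat split; auto; ring. }
  destruct (HV x HxV) as [del Hdel].
  assert (Hr : 0 < Rmin del 1) by (apply Rmin_pos; [apply cond_pos|lra]).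
  exists (mkposreal _ Hr). intros y Hy [k [m [Hk [Hm Hkm]]]].
  unfold disc in Hy; simpl in Hy.
  pose proof (Rmin_l del 1); pose proof (Rmin_r del 1).
  destruct (Rabs_def2 _ _ Hy) as [Hy1 Hy2].
  destruct (Hab k Hk) as [Hak Hkb].
  pose proof (base_Int_part (x - b)) as [HL1 HL2].
  destruct (archimed (b - a + 3)) as [HN _].
  assert (HmL : (L < m)%Z).
  { apply lt_IZR. unfold L. rewrite minus_IZR. simpl. lra. }
  assert (HmN : (m - L < up (b - a + 3))%Z).
  { apply lt_IZR. unfold L. rewrite !minus_IZR. simpl. lra. }
  apply (Hdel y); [unfold disc; lra|].
  exists (Z.to_nat (m - L)). split; [unfold N; lia|].
  replace (L + Z.of_nat (Z.to_nat (m - L)))%Z with m by lia.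
  split; [exact Hm|]. replace (y - IZR m) with k by lra. exact Hk.
Qed.

(* Otherwise the ±1-valued indicator of one of them would be continuous and
   change sign, contradicting the intermediate value theorem. *)
Lemma real_line_connected (F G : R -> Prop) :
  closed_set F -> closed_set G -> (forall x, F x \/ G x) ->
  (forall x, F x -> G x -> False) -> forall a b, F a -> G b -> False.
Proof.
  intros HF HG Hcov Hdisj a b Fa Gb.
  assert (HFo : open_set F).
  { apply (open_set_ext _ _ HG). intros x; specialize (Hdisj x); specialize (Hcov x).
    unfold complementary; tauto. }
  assert (HGo : open_set G).
  { apply (open_set_ext _ _ HF). intros x; specialize (Hdisj x); specialize (Hcov x).
    unfold complementary; tauto. }
  set (f := fun x => if excluded_middle_informative (F x) then -1 else 1).
  assert (Hf : continuity f).
  { apply continuity_P3. intros D _. unfold image_rec, f.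
    destruct (classic (D (-1))) as [Dm|Dm], (classic (D 1)) as [Dp|Dp];
      [apply (open_set_ext _ _ open_set_P5)|apply (open_set_ext _ _ HFo)
      |apply (open_set_ext _ _ HGo)|apply (open_set_ext _ _ open_set_P4)];
      intros x; specialize (Hdisj x); specialize (Hcov x);
      destruct (excluded_middle_informative (F x)); tauto. }
  assert (Hvals : forall x, f x <> 0).
  { intros x. unfold f. destruct (excluded_middle_informative (F x)); lra. }
  assert (Hab : f a * f b <= 0).
  { unfold f. destruct (excluded_middle_informative (F a)) as [_|nFa]; [|tauto].
    destruct (excluded_middle_informative (F b)) as [Fb|_];
      [exfalso; exact (Hdisj b Fb Gb)|lra]. }
  destruct (Rle_dec a b) as [Hle|Hgt].
  - destruct (IVT_cor f a b Hf Hle Hab) as [z [_ Hz]]. exact (Hvals z Hz).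
  - destruct (IVT_cor f b a Hf ltac:(lra) ltac:(rewrite Rmult_comm; exact Hab)) as [z [_ Hz]].
    exact (Hvals z Hz).
Qed.

Lemma nat_divide_Z (d a : nat) : Nat.divide d a <-> (Z.of_nat d | Z.of_nat a)%Z.
Proof.
  split.
  - intros [q ->]. exists (Z.of_nat q). lia.
  - intros [q Hq]. destruct (Nat.eq_dec d 0) as [->|Hd].
    + exists 0%nat. lia.
    + assert (0 <= q)%Z by nia. exists (Z.to_nat q). nia.
Qed.

Lemma not_rel_prime_common_divisor (A : list nat) :
  ~ rel_prime_set A -> exists d, (1 < d)%nat /\ forall a, In a A -> Nat.divide d a.
Proof.
  intros H. destruct A as [|a0 A'].
  - exists 2%nat. split; [lia|]. intros a [].
  - apply NNPP; intro C. apply H. split; [discriminate|].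
    intros d Hd Hall. apply C. eauto.
Qed.

Lemma N_set_nondivisible_difference (K : R -> Prop) (d : Z) :
  N_set K -> (1 < d)%Z ->
  ~ (forall x y m, K x -> K y -> (0 < m)%Z -> x - y = IZR m -> (d | m)%Z).
Proof.
  intros [HK Hcov] Hd Hdiv.
  assert (Hall : forall x y m, K x -> K y -> x - y = IZR m -> (d | m)%Z).
  { intros x y m Hx Hy Hxy. destruct (Z.lt_trichotomy 0 m) as [Hm|[<-|Hm]].
    - eauto.
    - apply Z.divide_0_r.
    - apply Z.divide_opp_r, (Hdiv y x); auto; [lia|]. rewrite opp_IZR; lra. }
  destruct (Hcov 0) as [k0 [Hk0 _]].
  apply (real_line_connected
           (fun x => exists k m, K k /\ (d | m)%Z /\ x - k = IZR m)
           (fun x => exists k m, K k /\ ~ (d | m)%Z /\ x - k = IZR m)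
           (compact_plus_integers_closed K _ HK) (compact_plus_integers_closed K _ HK))
    with (a := k0) (b := k0 + 1).
  - intros x. destruct (Hcov x) as [k [Hk [m Hm]]].
    destruct (classic (d | m)%Z); [left|right]; exists k, m; auto.
  - intros x [k [m [Hk [Hm Hx]]]] [k' [m' [Hk' [Hm' Hx']]]]. apply Hm'.
    assert (Hmm : (d | m - m')%Z) by (apply (Hall k' k); auto; rewrite minus_IZR; lra).
    replace m' with (m - (m - m'))%Z by ring. now apply Z.divide_sub_r.
  - exists k0, 0%Z. repeat split; [exact Hk0|apply Z.divide_0_r|simpl; ring].
  - exists k0, 1%Z. repeat split; [exact Hk0| |simpl; ring].
    intros H1. apply Z.divide_pos_le in H1; lia.
Qed.

Definition sumZ (l : list Z) : Z := fold_right Z.add 0%Z l.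

Lemma sumZ_app (l1 l2 : list Z) : sumZ (l1 ++ l2) = (sumZ l1 + sumZ l2)%Z.
Proof. induction l1 as [|s l1 IH]; simpl; [reflexivity|]. unfold sumZ in *. simpl. lia. Qed.

Lemma sumZ_opp (l : list Z) : sumZ (map Z.opp l) = (- sumZ l)%Z.
Proof. induction l as [|s l IH]; simpl; [reflexivity|]. unfold sumZ in *. simpl. lia. Qed.

Definition signed_step (A : list nat) (s : Z) : Prop :=
  exists a, In a A /\ (s = Z.of_nat a \/ s = - Z.of_nat a)%Z.

Definition signed_sum (A : list nat) (z : Z) : Prop :=
  exists st, Forall (signed_step A) st /\ sumZ st = z.

Section SignedSums.

Variable A : list nat.

Lemma signed_sum_0 : signed_sum A 0.
Proof. exists nil. split; [constructor|reflexivity]. Qed.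

Lemma signed_sum_add (z1 z2 : Z) :
  signed_sum A z1 -> signed_sum A z2 -> signed_sum A (z1 + z2).
Proof.
  intros [s1 [H1 E1]] [s2 [H2 E2]]. exists (s1 ++ s2).
  split; [now apply Forall_app|]. rewrite sumZ_app; lia.
Qed.

Lemma signed_sum_opp (z : Z) : signed_sum A z -> signed_sum A (- z).
Proof.
  intros [s [H E]]. exists (map Z.opp s). split; [|rewrite sumZ_opp; lia].
  apply Forall_map. eapply Forall_impl; [|exact H].
  intros t [a [Ha [Et|Et]]]; exists a; split; auto; lia.
Qed.

Lemma signed_sum_mul (k z : Z) : signed_sum A z -> signed_sum A (k * z).
Proof.
  intros Hz.
  assert (Hnat : forall n : nat, signed_sum A (Z.of_nat n * z)).
  { induction n as [|n IH]; [apply signed_sum_0|].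
    replace (Z.of_nat (S n) * z)%Z with (z + Z.of_nat n * z)%Z by lia.
    now apply signed_sum_add. }
  destruct (Z_le_gt_dec 0 k).
  - replace k with (Z.of_nat (Z.to_nat k)) by lia. apply Hnat.
  - replace (k * z)%Z with (- (Z.of_nat (Z.to_nat (- k)) * z))%Z by lia.
    apply signed_sum_opp, Hnat.
Qed.

Lemma signed_sum_gen (a : nat) : In a A -> signed_sum A (Z.of_nat a).
Proof.
  intros Ha. exists (Z.of_nat a :: nil). split; [|simpl; lia].
  constructor; [|constructor]. exists a; auto.
Qed.

End SignedSums.

Definition gcd_list (L : list nat) : Z :=
  fold_right (fun a g => Z.gcd (Z.of_nat a) g) 0%Z L.

Lemma gcd_list_signed_sum (A L : list nat) : incl L A -> signed_sum A (gcd_list L).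
Proof.
  induction L as [|a L IH]; intros HL; simpl; [apply signed_sum_0|].
  destruct (Z.gcd_bezout (Z.of_nat a) (gcd_list L) _ eq_refl) as [u [v Huv]].
  rewrite <- Huv. apply signed_sum_add; apply signed_sum_mul.
  - apply signed_sum_gen, HL. now left.
  - apply IH. intros b Hb. apply HL. now right.
Qed.

Lemma gcd_list_divides (L : list nat) (a : nat) : In a L -> (gcd_list L | Z.of_nat a)%Z.
Proof.
  induction L as [|b L IH]; intros Ha; [destruct Ha|]. simpl.
  destruct Ha as [<-|Ha].
  - apply Z.gcd_divide_l.
  - eapply Z.divide_trans; [apply Z.gcd_divide_r|]. auto.
Qed.

Lemma gcd_list_nonneg (L : list nat) : (0 <= gcd_list L)%Z.
Proof. destruct L; simpl; [lia|apply Z.gcd_nonneg]. Qed.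

Lemma rel_prime_gcd_list (A : list nat) : rel_prime_set A -> gcd_list A = 1%Z.
Proof.
  intros [_ Hnd]. pose proof (gcd_list_nonneg A) as Hg.
  destruct (Z.eq_dec (gcd_list A) 1) as [|Hne]; [assumption|exfalso].
  destruct (Z.eq_dec (gcd_list A) 0) as [H0|H0].
  - apply (Hnd 2%nat); [lia|]. intros a Ha.
    pose proof (gcd_list_divides A a Ha) as Hd. rewrite H0 in Hd.
    apply Z.divide_0_l in Hd. replace a with 0%nat by lia. apply Nat.divide_0_r.
  - apply (Hnd (Z.to_nat (gcd_list A))); [lia|]. intros a Ha.
    apply nat_divide_Z. rewrite Z2Nat.id by lia. now apply gcd_list_divides.
Qed.

(* The walk: steps from A summing to -1 that contain every a ∈ A positively
   (a walk to -1, followed by all a ∈ A forward and then backward). *)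
Lemma walk_exists (A : list nat) : rel_prime_set A ->
  exists st, Forall (signed_step A) st /\ sumZ st = (-1)%Z /\
    forall a, In a A -> In (Z.of_nat a) st.
Proof.
  intros Hrp.
  destruct (signed_sum_opp A _ (gcd_list_signed_sum A A (incl_refl A))) as [st0 [H0 E0]].
  rewrite rel_prime_gcd_list in E0 by exact Hrp.
  exists (st0 ++ map Z.of_nat A ++ map Z.opp (map Z.of_nat A)). split; [|split].
  - apply Forall_app; split; [exact H0|]. apply Forall_app; split; apply Forall_map.
    + apply Forall_forall. intros a Ha. exists a; auto.
    + apply Forall_map, Forall_forall. intros a Ha. exists a; auto.
  - rewrite !sumZ_app, sumZ_opp. lia.
  - intros a Ha. apply in_or_app; right. apply in_or_app; left. now apply in_map.
Qed.

Definition partial_sum (st : list Z) (j : nat) : Z := sumZ (firstn j st).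

Lemma partial_sum_S (st : list Z) (l : nat) : (l < length st)%nat ->
  partial_sum st (S l) = (partial_sum st l + nth l st 0%Z)%Z.
Proof.
  revert l; induction st as [|s st IH]; intros l Hl; simpl in Hl; [lia|].
  destruct l as [|l]; unfold partial_sum in *; simpl; [unfold sumZ; simpl; lia|].
  specialize (IH l ltac:(lia)). unfold sumZ in *; simpl in *. lia.
Qed.

Lemma partial_sum_length (st : list Z) : partial_sum st (length st) = sumZ st.
Proof. unfold partial_sum. now rewrite firstn_all. Qed.

(* The staircase with N pieces and integer offsets c_0, ..., c_{N-1}: the union
   of the pieces j <= (x - c_j) N <= j + 1, i.e. x ∈ [c_j + j/N, c_j + (j+1)/N]. *)
Section Staircase.

Variables (c : nat -> Z) (N : nat).
Hypothesis N_pos : (0 < N)%nat.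

Definition staircase (x : R) : Prop :=
  exists j, (j < N)%nat /\ INR j <= (x - IZR (c j)) * INR N <= INR j + 1.

Lemma finite_offsets_bounded :
  exists B, forall j, (j < N)%nat -> (Z.abs (c j) <= B)%Z.
Proof.
  clear N_pos. induction N as [|M [B HB]].
  - exists 0%Z. intros j Hj. lia.
  - exists (Z.max B (Z.abs (c M))). intros j Hj.
    destruct (Nat.eq_dec j M) as [->|Hne]; [lia|]. specialize (HB j ltac:(lia)). lia.
Qed.

Lemma staircase_compact : compact staircase.
Proof.
  assert (HN : 0 < INR N) by (apply lt_0_INR; exact N_pos).
  apply compact_P5.
  - apply closed_set_finite_union. intros j _.
    apply (closed_set_preimage (fun x => (x - IZR (c j)) * INR N)
             (fun t => INR j <= t <= INR j + 1)); [reg|].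
    apply compact_P2, compact_P3.
  - destruct finite_offsets_bounded as [B HB].
    exists (- IZR B), (IZR B + 1). intros x [j [Hj [Hx1 Hx2]]].
    specialize (HB j Hj).
    assert (Hc : - IZR B <= IZR (c j) <= IZR B).
    { rewrite <- opp_IZR. split; apply IZR_le; lia. }
    assert (Hj1 : INR j + 1 <= INR N) by (rewrite <- S_INR; apply le_INR; lia).
    pose proof (pos_INR j).
    assert (0 <= x - IZR (c j) <= 1) by (split; nra).
    lra.
Qed.

(* Every real is congruent mod Z to a point of the staircase: the pieces,
   shifted by their offsets, tile [0, 1]. *)
Lemma staircase_covers (x : R) : exists y, staircase y /\ exists z : Z, x - y = IZR z.
Proof.
  assert (HN : 0 < INR N) by (apply lt_0_INR; exact N_pos).
  set (u := x - IZR (Int_part x)).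
  assert (Hu : 0 <= u < 1) by (pose proof (base_Int_part x); unfold u; lra).
  set (i := Int_part (u * INR N)).
  pose proof (base_Int_part (u * INR N)) as [Hi1 Hi2]; fold i in Hi1, Hi2.
  assert (Hi0 : (0 <= i)%Z) by (apply Z.lt_succ_r, lt_IZR; rewrite succ_IZR; simpl; nra).
  assert (HiN : (i < Z.of_nat N)%Z) by (apply lt_IZR; rewrite <- INR_IZR_INZ; nra).
  set (j := Z.to_nat i).
  assert (Hj : INR j = IZR i) by (unfold j; rewrite INR_IZR_INZ, Z2Nat.id; auto).
  exists (u + IZR (c j)). split.
  - exists j. split; [unfold j; lia|].
    replace (u + IZR (c j) - IZR (c j)) with u by ring. lra.
  - exists (Int_part x - c j)%Z. rewrite minus_IZR. unfold u. ring.
Qed.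

Lemma staircase_endpoints (j : nat) : (j < N)%nat ->
  staircase (IZR (c j) + INR j / INR N) /\ staircase (IZR (c j) + (INR j + 1) / INR N).
Proof.
  intros Hj.
  assert (HN : 0 < INR N) by (apply lt_0_INR; exact N_pos).
  assert (Hscale : forall a, (IZR (c j) + a / INR N - IZR (c j)) * INR N = a)
    by (intros a; field; lra).
  split; exists j; rewrite Hscale; split; try exact Hj; lra.
Qed.

Lemma staircase_integer_difference (x y : R) (n : Z) :
  staircase x -> staircase y -> x - y = IZR n ->
  exists j l, (j < N)%nat /\ (l < N)%nat /\
    ((n = c j - c l /\ (j = l \/ j = S l \/ l = S j)) \/
     (j = pred N /\ l = 0%nat /\ n = c j - c l + 1) \/
     (j = 0%nat /\ l = pred N /\ n = c j - c l - 1))%Z.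
Proof.
  clear N_pos. intros [j [Hj [Hx1 Hx2]]] [l [Hl [Hy1 Hy2]]] Hxy.
  exists j, l. split; [exact Hj|]. split; [exact Hl|].
  set (w := (n - c j + c l)%Z).
  assert (Hw : IZR w * INR N = (x - IZR (c j)) * INR N - (y - IZR (c l)) * INR N).
  { unfold w. rewrite plus_IZR, minus_IZR. nra. }
  assert (Hw1 : (w * Z.of_nat N <= Z.of_nat j - Z.of_nat l + 1)%Z).
  { apply le_IZR. rewrite mult_IZR, plus_IZR, minus_IZR, <- !INR_IZR_INZ. simpl. lra. }
  assert (Hw2 : (Z.of_nat j - Z.of_nat l - 1 <= w * Z.of_nat N)%Z).
  { apply le_IZR. rewrite mult_IZR, !minus_IZR, <- !INR_IZR_INZ. simpl. lra. }
  assert (Hwb : (-1 <= w <= 1)%Z) by nia.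
  assert (w = 0 \/ w = 1 \/ w = -1)%Z as [H0|[H0|H0]] by lia;
    rewrite H0 in Hw1, Hw2; unfold w in H0; [left|right; left|right; right]; lia.
Qed.

End Staircase.

Section WalkStaircase.

Variables (A : list nat) (st : list Z).
Hypothesis steps : Forall (signed_step A) st.
Hypothesis sum_st : sumZ st = (-1)%Z.

(* Each step is a difference of the staircase: right end of piece l versus
   left end of piece l+1. *)
Lemma walk_step_difference (l : nat) : (l < length st)%nat ->
  exists x y, staircase (partial_sum st) (S (length st)) x /\
    staircase (partial_sum st) (S (length st)) y /\ x - y = IZR (nth l st 0%Z).
Proof.
  intros Hl. set (N := S (length st)).
  destruct (staircase_endpoints (partial_sum st) N ltac:(lia) (S l) ltac:(lia)) as [Hx _].
  destruct (staircase_endpoints (partial_sum st) N ltac:(lia) l ltac:(lia)) as [_ Hy].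
  eexists; eexists; split; [exact Hx|]; split; [exact Hy|].
  rewrite partial_sum_S, plus_IZR, S_INR by exact Hl. ring.
Qed.

(* Conversely every positive integer difference is a step ±a, hence in A; the
   extreme case contributes c_{N-1} - c_0 ± 1 = -1 ± 1, never positive. *)
Lemma walk_positive_differences (x y : R) (n : Z) :
  staircase (partial_sum st) (S (length st)) x ->
  staircase (partial_sum st) (S (length st)) y ->
  x - y = IZR n -> (0 < n)%Z -> exists a, In a A /\ n = Z.of_nat a.
Proof.
  intros Hx Hy Hxy Hn.
  destruct (staircase_integer_difference _ _ x y n Hx Hy Hxy) as [j [l [Hj [Hl Hcase]]]].
  simpl pred in Hcase.
  assert (Hstep : forall i, (i < length st)%nat -> signed_step A (nth i st 0%Z))
    by (intros i Hi; exact (proj1 (Forall_forall _ _) steps _ (nth_In _ 0%Z Hi))).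
  destruct Hcase as [[E [ -> | [ -> | -> ] ]] | [[ -> [ -> E]] | [ -> [ -> E]]]];
    rewrite ?partial_sum_length, ?sum_st in E; try (unfold partial_sum in E; simpl in E; lia).
  - rewrite partial_sum_S in E by lia.
    destruct (Hstep l ltac:(lia)) as [a [Ha Ea]]. exists a; split; [exact Ha|lia].
  - rewrite partial_sum_S in E by lia.
    destruct (Hstep j ltac:(lia)) as [a [Ha Ea]]. exists a; split; [exact Ha|lia].
Qed.

End WalkStaircase.

(* The main theorem. *)
Theorem theorem1 (A : list nat) (HA : forall a, In a A -> (0 < a)%nat) :
  rel_prime_set A <->
  exists K : R -> Prop,
    N_set K /\
    (forall n : nat, (0 < n)%nat ->
       (In n A <-> exists x y : R, K x /\ K y /\ x - y = INR n)).
Proof.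
  split.
  - intros Hrp. destruct (walk_exists A Hrp) as [st [Hsteps [Hsum Hin]]].
    exists (staircase (partial_sum st) (S (length st))).
    split; [split; [apply staircase_compact|apply staircase_covers]; lia|].
    intros n Hn; split.
    + intros HnA. destruct (In_nth _ _ 0%Z (Hin n HnA)) as [l [Hl Hnth]].
      destruct (walk_step_difference st l Hl) as [x [y [Hx [Hy Hxy]]]].
      exists x, y. rewrite INR_IZR_INZ, <- Hnth. auto.
    + intros [x [y [Hx [Hy Hxy]]]]. rewrite INR_IZR_INZ in Hxy.
      destruct (walk_positive_differences A st Hsteps Hsum x y _ Hx Hy Hxy ltac:(lia))
        as [a [Ha Hna]].
      apply Nat2Z.inj in Hna. now subst.
  - intros [K [HK Hdiff]]. apply NNPP; intros Hnrp.
    destruct (not_rel_prime_common_divisor A Hnrp) as [d [Hd Hdvd]].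
    apply (N_set_nondivisible_difference K (Z.of_nat d) HK ltac:(lia)).
    intros x y m Hx Hy Hm Hxy.
    assert (HmA : In (Z.to_nat m) A).
    { apply Hdiff; [lia|]. exists x, y. rewrite INR_IZR_INZ, Z2Nat.id by lia. auto. }
    rewrite <- (Z2Nat.id m) by lia. now apply nat_divide_Z, Hdvd.
Qed.
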